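(* Let $k$ be a positive integer and $G$ a graph. (1) If $G$ contains a Hamiltonian cycle $C$ such that $G-E(C)\in\mathcal{SZ}_k$, then $G\in\mathcal{SC}_k$. (2) If for any two distinct vertices $x,y$ of $G$ there is a Hamiltonian $(x,y)$-path $P_{xy}$ such that $G-E(P_{xy})\in\mathcal{SZ}_k$, then $G\in\mathcal{W}_k$.
   Context: Graphs may have parallel edges but no loops. A $\mathbb{Z}_k$-boundary of $G$ is a map $\beta:V(G)\to\mathbb{Z}_k$ with $\sum_v\beta(v)\equiv0\pmod k$; a $(\mathbb{Z}_k,\beta)$-orientation is an orientation $D$ with $d^+_D(v)-d^-_D(v)\equiv\beta(v)\pmod k$ for all $v$; $G$ is strongly $\mathbb{Z}_k$-connected (written $G\in\mathcal{SZ}_k$) if it has a $(\mathbb{Z}_k,\beta)$-orientation for every $\mathbb{Z}_k$-boundary $\beta$. A $\mathbb{Z}_{2k}$-pc-boundary of $G$ is a map $\beta:V(G)\to\{0,\pm1,\dots,\pm k\}$ with $\beta(v)\equiv d_G(v)\pmod2$ for all $v$ and $\sum_v\beta(v)\equiv0\pmod{2k}$; a $(2k,\beta)$-orientation is an orientation $D$ with $d^+_D(v)-d^-_D(v)\equiv\beta(v)\pmod{2k}$ for all $v$. An orientation is strongly connected if every nonempty proper vertex subset $S$ has $d^+_D(S)>0$ and $d^-_D(S)>0$. $\mathcal{SC}_k$ is the family of graphs having a strongly connected $(2k,\beta)$-orientation for every $\mathbb{Z}_{2k}$-pc-boundary $\beta$. A graph $G$ is a nice supergraph of $H$ if $H\subseteq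 G$ and there are distinct $x,y\in V(H)$ joined by a path in $G-E(H)$. For connected $H\subseteq G$, $G/H$ is obtained by identifying $V(H)$ into a new vertex $w$ and deleting loops; given a $\mathbb{Z}_{2k}$-pc-boundary $\beta$ of $G$, $\beta'$ on $G/H$ is defined by $\beta'(w)\equiv\sum_{v\in V(H)}\beta(v)\pmod{2k}$ (taken in $\{0,\pm1,\dots,\pm k\}$) and $\beta'(v)=\beta(v)$ otherwise. $H\in\mathcal{W}_k$ (weakly contractible) if for every nice supergraph $G$ of $H$ and every $\mathbb{Z}_{2k}$-pc-boundary $\beta$ of $G$, every strongly connected $(2k,\beta')$-orientation of $G/H$ can be extended (by orienting the edges of $H$) to a strongly connected $(2k,\beta)$-orientation of $G$. *)

From mathcomp Require Import all_boot all_order all_algebra.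
Set Implicit Arguments. Unset Strict Implicit. Unset Printing Implicit Defensive.
Import GRing.Theory Num.Theory.
Local Open Scope ring_scope.

(* Multigraphs (parallel edges allowed, no loops).  A graph is given by a
   finite vertex type V, a finite edge type E, endpoint maps src tgt : E -> V
   and the set D : {set E} of edges that are actually present.
   An orientation is o : E -> bool : if o e then e is directed src e -> tgt e,
   otherwise tgt e -> src e (only its values on D matter). *)

Section Graphs.
Variables (V E : finType) (src tgt : E -> V).

Definition joins (e : E) (a b : V) : bool :=
  ((src e == a) && (tgt e == b)) || ((src e == b) && (tgt e == a)).

Definition loopless (D : {set E}) : Prop := forall e, e \in D -> src e != tgt e.

Definition tail (o : E -> bool) (e : E) : V := if o e then src e else tgt e.
Definition head (o : E -> bool) (e : E) : V := if o e then tgt e else src e.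

Definition netout (D : {set E}) (o : E -> bool) (v : V) : int :=
  (#|[set e in D | tail o e == v]|)%:Z - (#|[set e in D | head o e == v]|)%:Z.

(* degree (no loops, so each incident edge counts once) *)
Definition deg (D : {set E}) (v : V) : nat :=
  #|[set e in D | (src e == v) || (tgt e == v)]|.

Definition strongly_connected (D : {set E}) (o : E -> bool) : Prop :=
  forall S : {set V}, S != set0 -> S != setT ->
    (exists2 e, e \in D & (tail o e \in S) && (head o e \notin S)) /\
    (exists2 e, e \in D & (head o e \in S) && (tail o e \notin S)).

(* Z_k-boundaries are represented by integer lifts beta : V -> int;
   all conditions on them are congruences mod k. *)
Definition SZ (k : nat) (D : {set E}) : Prop :=
  forall beta : V -> int, (\sum_(v : V) beta v == 0 %[mod k%:Z])%Z ->
    exists o : E -> bool, forall v, (netout D o v == beta v %[mod k%:Z])%Z.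

Definition pc_boundary (k : nat) (D : {set E}) (beta : V -> int) : Prop :=
  [/\ forall v, `|beta v| <= k%:Z,
      forall v, (beta v == (deg D v)%:Z %[mod 2])%Z
    & (\sum_(v : V) beta v == 0 %[mod (2 * k)%N%:Z])%Z].

Definition SC (k : nat) (D : {set E}) : Prop :=
  forall beta : V -> int, pc_boundary k D beta ->
    exists o : E -> bool, strongly_connected D o /\
      forall v, (netout D o v == beta v %[mod (2 * k)%N%:Z])%Z.

Definition adj (D : {set E}) : rel V :=
  fun a b => [exists e in D, joins e a b].

Definition ham_cycle (D C : {set E}) : Prop :=
  exists (vs : nat -> V) (es : nat -> E),
    let n := #|V| in
    (2 <= n)%N /\
    [/\ {in [pred i | (i < n)%N] &, injective vs},
        (forall v, exists2 i, (i < n)%N & vs i = v),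
        {in [pred i | (i < n)%N] &, injective es} /\
        (forall i, (i < n)%N -> es i \in D /\ joins (es i) (vs i) (vs (i.+1 %% n)%N))
      & C = [set e | [exists i : 'I_n, es i == e]]].

Definition ham_path (D : {set E}) (x y : V) (P : {set E}) : Prop :=
  exists (vs : nat -> V) (es : nat -> E),
    let n := #|V| in
    [/\ {in [pred i | (i < n)%N] &, injective vs},
        (forall v, exists2 i, (i < n)%N & vs i = v),
        vs 0%N = x /\ vs n.-1 = y,
        (forall i, (i.+1 < n)%N -> es i \in D /\ joins (es i) (vs i) (vs i.+1))
      & P = [set e | [exists i : 'I_n.-1, es i == e]]].

End Graphs.

(* Contraction G/H where H is embedded in G = (V', E', src', tgt', D') through
   fV : V -> V' (all vertices of H).  The vertices of G/H are
   option {x : V' | x \notin codom fV}; None is the new vertex w. *)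
Section Contraction.
Variables (V V' E' : finType) (fV : V -> V') (src' tgt' : E' -> V').

Definition cverts := option {x : V' | x \notin codom fV}.
Definition cmap (x : V') : option {x : V' | x \notin codom fV} := insub x.
Definition csrc (e : E') := cmap (src' e).
Definition ctgt (e : E') := cmap (tgt' e).
Definition cedges (D' : {set E'}) : {set E'} :=
  [set e in D' | csrc e != ctgt e].
(* induced boundary beta' (taken as an integer; only its class mod 2k matters) *)
Definition cbeta (beta : V' -> int) (u : option {x : V' | x \notin codom fV}) : int :=
  match u with
  | None => \sum_(v : V) beta (fV v)
  | Some x => beta (val x)
  end.
End Contraction.
Arguments cmap {V V'} fV x.
Arguments csrc {V V' E'} fV src' e.
Arguments ctgt {V V' E'} fV tgt' e.
Arguments cedges {V V' E'} fV src' tgt' D'.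
Arguments cbeta {V V'} fV beta u.

Definition W (k : nat) (V E : finType) (src tgt : E -> V) (D : {set E}) : Prop :=
  forall (V' E' : finType) (src' tgt' : E' -> V') (D' : {set E'})
         (fV : V -> V') (fE : E -> E'),
    loopless src' tgt' D' ->
    (* H is a subgraph of G *)
    injective fV -> {in D &, injective fE} ->
    (forall e, e \in D -> fE e \in D' /\ joins src' tgt' (fE e) (fV (src e)) (fV (tgt e))) ->
    (* G is a nice supergraph of H *)
    (exists x y : V, x != y /\ connect (adj src' tgt' (D' :\: fE @: D)) (fV x) (fV y)) ->
    forall beta : V' -> int, pc_boundary src' tgt' k D' beta ->
    forall o' : E' -> bool,
      strongly_connected (csrc fV src') (ctgt fV tgt') (cedges fV src' tgt' D') o' ->
      (forall u, (netout (csrc fV src') (ctgt fV tgt') (cedges fV src' tgt' D') o' u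
                   == cbeta fV beta u %[mod (2 * k)%N%:Z])%Z) ->
      exists o : E' -> bool,
        [/\ strongly_connected src' tgt' D' o,
            (forall v, (netout src' tgt' D' o v == beta v %[mod (2 * k)%N%:Z])%Z)
          & (forall e, e \in cedges fV src' tgt' D' -> o e = o' e)].

From Pilot Require Import Defs.
From mathcomp Require Import all_boot all_order all_algebra.
From mathcomp Require Import ring zify.
Set Implicit Arguments. Unset Strict Implicit. Unset Printing Implicit Defensive.
Import GRing.Theory Num.Theory.
Local Open Scope ring_scope.

(* (1) Orient the Hamiltonian cycle C cyclically: this alone makes the
   orientation strongly connected.  As G - E(C) is SZ_k, its edges can then be
   oriented so that the net outdegree is beta mod k everywhere.  An SZ_k graph
   with two vertices forces k odd, and the net outdegree always has the parity
   of the degree, hence of beta; so the congruence holds mod 2k.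
   (2) In a nice supergraph G of H, strong connectivity of G/H yields a directed
   path outside E(H) from a vertex a of H to another vertex b.  Orient a
   Hamiltonian (b,a)-path of H from b to a and use SZ_k on the rest of H to fix
   the boundary at the vertices of H (the other vertices keep the boundary of
   G/H).  All vertices of H then lie on a directed closed walk, and every cut of
   G that does not split V(H) is a cut of G/H. *)

Section Walks.
Variables (T : finType) (r : rel T) (n : nat) (vs : nat -> T).
Hypothesis step : forall i, (i.+1 < n)%N -> r (vs i) (vs i.+1).

Lemma connect_walk i j : (i <= j < n)%N -> connect r (vs i) (vs j).
Proof.
elim: j => [|j IH] /andP [ij jn]; first by move: ij; rewrite leqn0 => /eqP ->.
move: ij; rewrite leq_eqVlt => /orP [/eqP -> //|ij].
by apply: connect_trans (IH _) (connect1 (step jn)); rewrite -ltnS ij ltnW.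
Qed.

Lemma connect_closed_walk : connect r (vs n.-1) (vs 0%N) ->
  forall i j, (i < n)%N -> (j < n)%N -> connect r (vs i) (vs j).
Proof.
move=> back i j iN jN; case: (leqP i j) => ij; first by apply: connect_walk; rewrite ij.
apply: connect_trans (connect_walk (i := i) (j := n.-1) _) (connect_trans back (connect_walk _)).
  by rewrite -ltnS prednK ?iN //; lia.
by rewrite jN.
Qed.

End Walks.

(* Otherwise each vertex is r-reachable from exactly one image f a, and this
   label is constant along s-edges. *)
Lemma connect_image_distinct (T I : finType) (f : I -> T) (r s : rel T) :
  (forall u v, s u v -> r u v || r v u) ->
  (forall v, exists a, connect r v (f a)) -> (forall v, exists a, connect r (f a) v) ->
  forall x y, x != y -> connect s (f x) (f y) ->
  exists a b, a != b /\ connect r (f a) (f b).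
Proof.
move=> s_r out_f in_f x y xy sxy.
case: (boolP [exists a, exists b, (a != b) && connect r (f a) (f b)]) =>
  [/existsP [a /existsP [b /andP [ab rab]]]|]; first by exists a, b.
rewrite negb_exists => /forallP no_pair; exfalso.
have loop a b : connect r (f a) (f b) -> a = b.
  move=> rab; apply/eqP; apply: contraR (no_pair a) => ab.
  by apply/existsP; exists b; rewrite ab.
have source_uniq v a b : connect r (f a) v -> connect r (f b) v -> a = b.
  have [c vc] := out_f v => av bv.
  by rewrite (loop _ _ (connect_trans av vc)) (loop _ _ (connect_trans bv vc)).
have closed_from_x : closed s [pred v | connect r (f x) v].
  move=> u v /s_r /orP [] ruv /=.
    apply/idP/idP => [xu|xv]; first exact: connect_trans xu (connect1 ruv).
    have [b bu] := in_f u.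
    by rewrite (source_uniq _ _ _ xv (connect_trans bu (connect1 ruv))).
  apply/idP/idP => [xu|xv]; last exact: connect_trans xv (connect1 ruv).
  have [b bv] := in_f v.
  by rewrite (source_uniq _ _ _ xu (connect_trans bv (connect1 ruv))).
have := closed_connect closed_from_x sxy; rewrite !inE connect0 => /esym /loop.
by move/eqP: xy.
Qed.

Lemma eqz_mod_mul2 k (a b : int) :
  (a == b %[mod (2 * k)%N%:Z])%Z -> (a == b %[mod k%:Z])%Z.
Proof. by rewrite !eqz_mod_dvd; apply: dvdz_trans; rewrite PoszM dvdz_mull. Qed.

Section Orientations.
Variables (V E : finType) (src tgt : E -> V).

Local Notation tail := (tail src tgt).
Local Notation head := (Defs.head src tgt).
Local Notation netout := (netout src tgt).

Lemma eq_tail (o1 o2 : E -> bool) e : o1 e = o2 e -> tail o1 e = tail o2 e.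
Proof. by rewrite /Defs.tail => ->. Qed.

Lemma eq_head (o1 o2 : E -> bool) e : o1 e = o2 e -> head o1 e = head o2 e.
Proof. by rewrite /Defs.head => ->. Qed.

Lemma card_set_sumz (D : {set E}) (p : pred E) :
  #|[set e in D | p e]|%:Z = \sum_(e in D) (p e : nat)%:Z.
Proof.
rewrite -sum1_card -natz natr_sum big_mkcond [RHS]big_mkcond /=.
by apply: eq_bigr => e _; rewrite inE; case: (e \in D); case: (p e).
Qed.

Lemma netoutE D o v : netout D o v =
  \sum_(e in D) (((tail o e == v) : nat)%:Z - ((head o e == v) : nat)%:Z).
Proof. by rewrite /Defs.netout !card_set_sumz sumrB. Qed.

Lemma netout_sum D o : \sum_v netout D o v = 0.
Proof.
have sum_eq1 (w : V) : \sum_v ((w == v) : nat)%:Z = 1.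
  rewrite (bigD1 w) //= eqxx big1 ?addr0 // => v /negbTE.
  by rewrite eq_sym => ->.
under eq_bigr do rewrite netoutE.
by rewrite exchange_big big1 // => e _; rewrite sumrB !sum_eq1 subrr.
Qed.

Lemma netout_setID D A o v :
  netout D o v = netout (D :&: A) o v + netout (D :\: A) o v.
Proof. by rewrite !netoutE (big_setID A). Qed.

Lemma eq_netout (D : {set E}) (o1 o2 : E -> bool) v : {in D, o1 =1 o2} ->
  netout D o1 v = netout D o2 v.
Proof.
move=> eq_o; rewrite !netoutE; apply: eq_bigr => e /eq_o eq_oe.
by rewrite (eq_tail eq_oe) (eq_head eq_oe).
Qed.

Lemma netout_eq0 (D : {set E}) o v : (forall e, e \in D -> (src e == v) = (tgt e == v)) ->
  netout D o v = 0.
Proof.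
move=> ends; rewrite netoutE big1 // => e /ends.
by rewrite /Defs.tail /Defs.head; case: (o e) => ->; rewrite subrr.
Qed.

Lemma netout_parity D o v : loopless src tgt D ->
  (netout D o v == (deg src tgt D v)%:Z %[mod 2])%Z.
Proof.
move=> ll.
have -> : (deg src tgt D v)%:Z =
    \sum_(e in D) (((tail o e == v) : nat)%:Z + ((head o e == v) : nat)%:Z).
  rewrite /deg card_set_sumz; apply: eq_bigr => e /ll /negbTE ne.
  rewrite /Defs.tail /Defs.head.
  by case: (o e); case: (src e =P v) => [sv|_]; case: (tgt e =P v) => [tv|_] //;
    rewrite sv tv eqxx in ne.
rewrite netoutE sumrB big_split /= eqz_mod_dvd.
set a := \sum_(e in D) _; set b := \sum_(e in D) _.
by rewrite (_ : a - b - (a + b) = - b * 2%:Z) ?dvdz_mull //; ring.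
Qed.

(* If 2 | k, netout is fixed mod 2 by the degrees, so a boundary of the wrong
   parity at u cannot be realized. *)
Lemma odd_SZ k (D : {set E}) (u w : V) :
  loopless src tgt D -> u != w -> SZ src tgt k D -> odd k.
Proof.
move=> ll uw sz; apply/negPn/negP => even_k.
pose c : int := (deg src tgt D u)%:Z + 1.
pose beta v : int := if v == u then c else if v == w then - c else 0.
have wu : (w == u) = false by rewrite eq_sym (negbTE uw).
have [|o o_beta] := sz beta.
  rewrite (bigD1 u) // (bigD1 w) ?wu //= big1 => [|v /andP [/negbTE vu /negbTE vw]].
    by rewrite /beta eqxx wu eqxx addr0 subrr.
  by rewrite /beta vu vw.
have two_k : (2 %| k%:Z)%Z by have : (2 %| k)%N by rewrite dvdn2.
have := netout_parity o u ll; have := o_beta u.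
rewrite /beta eqxx !eqz_mod_dvd => /(dvdz_trans two_k) /rpredB h /h.
by rewrite (_ : _ - _ - _ = - 1) ?rpredN //; rewrite /c; ring.
Qed.

Lemma SZ_extend k (D F : {set E}) (oF : E -> bool) (alpha : V -> int) :
  SZ src tgt k (D :\: F) -> (\sum_v alpha v == 0 %[mod k%:Z])%Z ->
  exists2 o, {in F, o =1 oF} & forall v, (netout D o v == alpha v %[mod k%:Z])%Z.
Proof.
move=> sz alpha0.
have [|oS oS_gamma] := sz (fun v => alpha v - netout (D :&: F) oF v).
  by rewrite sumrB netout_sum subr0.
pose o e := if e \in F then oF e else oS e.
exists o => [e eF|v]; first by rewrite /o eF.
have -> : netout D o v = netout (D :&: F) oF v + netout (D :\: F) oS v.
  rewrite (netout_setID _ F); congr (_ + _); apply: eq_netout => e.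
    by rewrite /o => /setIP [_ ->].
  by rewrite /o => /setDP [_ /negbTE ->].
move: (oS_gamma v); rewrite !eqz_mod_dvd.
by rewrite (_ : _ + _ - _ = netout (D :\: F) oS v - (alpha v - netout (D :&: F) oF v)) //; ring.
Qed.

Lemma netout_mod2k k (D : {set E}) o (beta : V -> int) v :
  odd k -> loopless src tgt D -> (beta v == (deg src tgt D v)%:Z %[mod 2])%Z ->
  (netout D o v == beta v %[mod k%:Z])%Z -> (netout D o v == beta v %[mod (2 * k)%N%:Z])%Z.
Proof.
move=> odd_k ll beta_par; rewrite !eqz_mod_dvd PoszM Gauss_dvdz => [->|]; last first.
  by have := coprime2n k; rewrite odd_k /coprime => /eqP g; rewrite /coprimez /gcdz /= g.
have := netout_parity o v ll; move: beta_par; rewrite !eqz_mod_dvd andbT => /rpredB h /h.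
by rewrite (_ : _ - _ - _ = - (netout D o v - beta v)) ?rpredN //; ring.
Qed.

Definition darc (D : {set E}) (o : E -> bool) : rel V :=
  fun a b => [exists e in D, (tail o e == a) && (head o e == b)].

Lemma darc_edge (D : {set E}) o e : e \in D -> darc D o (tail o e) (head o e).
Proof. by move=> eD; apply/existsP; exists e; rewrite eD !eqxx. Qed.

Lemma connect_darc_sub (D1 D2 : {set E}) (o1 o2 : E -> bool) :
  D1 \subset D2 -> {in D1, o1 =1 o2} ->
  subrel (connect (darc D1 o1)) (connect (darc D2 o2)).
Proof.
move=> sD12 eq_o; apply: connect_sub => a b /existsP [e /andP [eD1 /andP [/eqP <- /eqP <-]]].
by rewrite (eq_tail (eq_o e eD1)) (eq_head (eq_o e eD1)) connect1 // darc_edge // (subsetP sD12).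
Qed.

Lemma darc_rev (D : {set E}) o a b : darc D (fun e => ~~ o e) a b = darc D o b a.
Proof.
apply: eq_existsb => e; rewrite /Defs.tail /Defs.head.
by case: (o e); rewrite /= [X in _ && X]andbC.
Qed.

Lemma adj_darc (D : {set E}) o u v : adj src tgt D u v -> darc D o u v || darc D o v u.
Proof.
case/existsP => e /andP [eD]; have := darc_edge o eD.
by rewrite /joins /Defs.tail /Defs.head; case: (o e) => arc /orP [] /andP [/eqP su /eqP tv];
  rewrite -su -tv arc ?orbT.
Qed.

Lemma strongly_connected_out (D : {set E}) o :
  (forall S : {set V}, S != set0 -> S != setT ->
     exists2 e, e \in D & (tail o e \in S) && (head o e \notin S)) ->
  strongly_connected src tgt D o.
Proof.
move=> out S S0 ST; split; first exact: out.
have [||e eD] := out (~: S).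
- by rewrite -setCT (inj_eq (@setC_inj _)).
- by rewrite -setC0 (inj_eq (@setC_inj _)).
by rewrite !inE negbK andbC; exists e.
Qed.

Lemma strongly_connected_rev (D : {set E}) o :
  strongly_connected src tgt D o -> strongly_connected src tgt D (fun e => ~~ o e).
Proof.
move=> sc; apply: strongly_connected_out => S S0 ST; have [_ [e eD in_out]] := sc S S0 ST.
by exists e; move: in_out; rewrite // /Defs.tail /Defs.head; case: (o e).
Qed.

Lemma connect_cross (D : {set E}) o (S : {set V}) x y :
  connect (darc D o) x y -> x \in S -> y \notin S ->
  exists2 e, e \in D & (tail o e \in S) && (head o e \notin S).
Proof.
move=> /connectP [p]; elim: p x => [|z p IH] x /= => [_ -> ->|/andP [xz zp] y_last xS yS] //.
case zS: (z \in S); first exact: IH zp y_last zS yS.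
by case/existsP: xz => e /andP [eD /andP [/eqP ex /eqP ez]]; exists e; rewrite // ex ez xS zS.
Qed.

Lemma strongly_connected_connect (D : {set E}) o :
  (forall u v, connect (darc D o) u v) -> strongly_connected src tgt D o.
Proof.
move=> conn; apply: strongly_connected_out => S /set0Pn [x xS].
rewrite -properT => /properP [_ [y _ yS]].
exact: connect_cross (conn x y) xS yS.
Qed.

Definition along (m : nat) (vs : nat -> V) (es : nat -> E) (e : E) : bool :=
  [exists i : 'I_m, (es i == e) && (src e == vs i)].

Lemma along_arc (D : {set E}) m vs es (nxt : nat -> nat) :
  loopless src tgt D -> {in [pred i | (i < m)%N] &, injective es} ->
  (forall i, (i < m)%N -> es i \in D /\ joins src tgt (es i) (vs i) (vs (nxt i))) ->
  forall i, (i < m)%N ->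
    tail (along m vs es) (es i) = vs i /\ head (along m vs es) (es i) = vs (nxt i).
Proof.
move=> ll es_inj es_ok i im; have [/ll loopfree ends] := es_ok i im.
rewrite /Defs.tail /Defs.head; case/orP: ends => /andP [/eqP s /eqP t].
  by have -> : along m vs es (es i) by apply/existsP; exists (Ordinal im); rewrite eqxx s eqxx.
have -> // : along m vs es (es i) = false.
apply/negbTE/negP => /existsP [j /andP [/eqP ej /eqP sj]].
have ji : val j = i by apply: es_inj; rewrite ?inE ?ltn_ord.
by move: loopfree; rewrite t sj ji eqxx.
Qed.

Lemma joins_inj e a b c d : joins src tgt e a b -> joins src tgt e c d ->
  (a == c) && (b == d) || (a == d) && (b == c).
Proof.
by rewrite /joins => /orP [] /andP [/eqP <- /eqP <-] /orP [] /andP [/eqP <- /eqP <-];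
  rewrite !eqxx ?orbT.
Qed.

Lemma path_edges_inj n (vs : nat -> V) (es : nat -> E) :
  {in [pred i | (i < n)%N] &, injective vs} ->
  (forall i, (i.+1 < n)%N -> joins src tgt (es i) (vs i) (vs i.+1)) ->
  {in [pred i | (i < n.-1)%N] &, injective es}.
Proof.
move=> vs_inj es_ok i j; rewrite !inE !ltn_predRL => iN jN eij.
have := es_ok j jN; rewrite -eij => /(joins_inj (es_ok i iN)).
have vs_eq p q : (p < n)%N -> (q < n)%N -> (vs p == vs q) = (p == q).
  by move=> pn qn; apply/eqP/eqP => [/vs_inj|->] //; apply; rewrite inE.
rewrite !vs_eq ?(ltnW iN) ?(ltnW jN) //; lia.
Qed.

Lemma ham_cycle_orient (D C : {set E}) : loopless src tgt D -> ham_cycle src tgt D C ->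
  exists oC, forall u v, connect (darc C oC) u v.
Proof.
move=> ll [vs [es [n2 [vs_inj vs_onto [es_inj es_ok] ->]]]].
set n := #|V| in n2 vs_inj vs_onto es_inj es_ok *.
have n_pos : (0 < n)%N by apply: leq_trans n2.
exists (along n vs es) => u v.
have step i : (i < n)%N ->
    darc [set e | [exists j : 'I_n, es j == e]] (along n vs es) (vs i) (vs (i.+1 %% n)%N).
  move=> iN; have [<- <-] := along_arc ll es_inj es_ok iN.
  by apply: darc_edge; rewrite inE; apply/existsP; exists (Ordinal iN).
have [i iN <-] := vs_onto u; have [j jN <-] := vs_onto v.
apply: connect_closed_walk iN jN => [l lN|].
  by have := step l (ltnW lN); rewrite modn_small.
by apply: connect1; have := step n.-1; rewrite prednK // modnn; apply.
Qed.

Lemma ham_path_orient (D P : {set E}) x y : loopless src tgt D -> ham_path src tgt D x y P ->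
  exists oP, forall v, connect (darc P oP) x v /\ connect (darc P oP) v y.
Proof.
move=> ll [vs [es [vs_inj vs_onto [vs0 vsn] es_ok ->]]].
set n := #|V| in vs_inj vs_onto vsn es_ok *.
have es_ok' i : (i < n.-1)%N -> es i \in D /\ joins src tgt (es i) (vs i) (vs i.+1).
  by rewrite ltn_predRL; apply: es_ok.
have es_inj := path_edges_inj vs_inj (fun i iN => (es_ok i iN).2).
exists (along n.-1 vs es) => v.
have step i : (i.+1 < n)%N ->
    darc [set e | [exists j : 'I_n.-1, es j == e]] (along n.-1 vs es) (vs i) (vs i.+1).
  rewrite -ltn_predRL => iN; have [<- <-] := along_arc ll es_inj es_ok' iN.
  by apply: darc_edge; rewrite inE; apply/existsP; exists (Ordinal iN).
have [i iN <-] := vs_onto v.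
by split; [rewrite -vs0 | rewrite -vsn]; apply: (connect_walk step); lia.
Qed.

End Orientations.

Section Contraction.
Variables (V V' E' : finType) (fV : V -> V') (src' tgt' : E' -> V').

Local Notation cmap := (cmap fV).
Local Notation csrc := (csrc fV src').
Local Notation ctgt := (ctgt fV tgt').
Local Notation cedges := (cedges fV src' tgt').

Lemma cmap_eqNone w : (cmap w == None) = (w \in codom fV).
Proof. by rewrite /Defs.cmap; case: insubP => [x /negbTE ->|/negbNE ->]. Qed.

Lemma cmap_image a : cmap (fV a) = None.
Proof. by apply/eqP; rewrite cmap_eqNone codom_f. Qed.

Lemma cmapK w x : cmap w = Some x -> val x = w.
Proof. by rewrite /Defs.cmap; case: insubP => // y _ <- [<-]. Qed.

Lemma cmap_val x : cmap (val x) = Some x.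
Proof. by rewrite /Defs.cmap valK. Qed.

Lemma cmap_eqSome w x : (cmap w == Some x) = (w == val x).
Proof. by apply/eqP/eqP => [/cmapK <-|->]; last exact: cmap_val. Qed.

Lemma tail_cmap o e : tail csrc ctgt o e = cmap (tail src' tgt' o e).
Proof. by rewrite /Defs.tail /Defs.csrc /Defs.ctgt; case: (o e). Qed.

Lemma head_cmap o e : Defs.head csrc ctgt o e = cmap (Defs.head src' tgt' o e).
Proof. by rewrite /Defs.head /Defs.csrc /Defs.ctgt; case: (o e). Qed.

Lemma cedges_sub (F : {set E'}) : cedges F \subset F.
Proof. by apply/subsetP => e; rewrite inE => /andP []. Qed.

Lemma cmap_loop (F : {set E'}) e : e \in F -> e \notin cedges F -> cmap (src' e) = cmap (tgt' e).
Proof. by move=> eF; rewrite inE eF negbK => /eqP. Qed.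

Lemma netout_cedges_Some (F : {set E'}) o x :
  netout csrc ctgt (cedges F) o (Some x) = netout src' tgt' F o (val x).
Proof.
rewrite [RHS](netout_setID _ _ _ (cedges F)) (setIidPr (cedges_sub F)).
rewrite [X in _ + X]netout_eq0 ?addr0 => [|e /setDP [eF /(cmap_loop eF) loop]]; last first.
  by rewrite -!cmap_eqSome loop.
by rewrite !netoutE; apply: eq_bigr => e _; rewrite tail_cmap head_cmap !cmap_eqSome.
Qed.

Lemma mem_imset_cmap (S : {set V'}) w :
  {in codom fV &, forall u u', (u \in S) = (u' \in S)} ->
  (cmap w \in cmap @: S) = (w \in S).
Proof.
move=> saturated; apply/imsetP/idP => [[u uS]|]; last by exists w.
case cw: (cmap w) => [x|] cu.
  by rewrite -(cmapK cw) (cmapK (esym cu)).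
by move/eqP: cw (esym cu) => + /eqP; rewrite !cmap_eqNone => wV uV; rewrite (saturated _ _ wV uV).
Qed.

(* A cut splitting the image of fV is crossed by the paths between its vertices;
   any other cut is the preimage of a cut of the contraction. *)
Lemma strongly_connected_lift (D' : {set E'}) (o o' : E' -> bool) :
  {in cedges D', o =1 o'} -> strongly_connected csrc ctgt (cedges D') o' ->
  (forall a b, connect (darc src' tgt' D' o) (fV a) (fV b)) ->
  strongly_connected src' tgt' D' o.
Proof.
move=> eq_o sc' conn; apply: strongly_connected_out => S /set0Pn [x xS].
rewrite -properT => /properP [_ [y _ yS]].
case: (boolP [exists a, exists b, (fV a \in S) && (fV b \notin S)]).
  by case/existsP => a /existsP [b /andP [aS bS]]; apply: connect_cross (conn a b) aS bS.
rewrite negb_exists => /forallP unsplit.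
have saturated : {in codom fV &, forall u u', (u \in S) = (u' \in S)}.
  move=> _ _ /codomP [a ->] /codomP [b ->].
  have := unsplit a; have := unsplit b; rewrite !negb_exists => /forallP /(_ a) + /forallP /(_ b).
  by case: (fV a \in S); case: (fV b \in S).
have [||[e eC] + _] := sc' (cmap @: S).
- by apply/set0Pn; exists (cmap x); apply: imset_f.
- by rewrite -properT; apply/properP; split => //; exists (cmap y); rewrite ?mem_imset_cmap.
rewrite tail_cmap head_cmap !mem_imset_cmap //.
rewrite -(eq_tail src' tgt' (eq_o e eC)) -(eq_head src' tgt' (eq_o e eC)).
by exists e => //; apply: (subsetP (cedges_sub D')).
Qed.

Lemma connect_to_image (D' : {set E'}) o' :
  strongly_connected csrc ctgt (cedges D') o' ->
  forall v, exists a, connect (darc src' tgt' (cedges D') o') v (fV a).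
Proof.
move=> sc' v; pose R := [set w | connect (darc src' tgt' (cedges D') o') v w].
case: (boolP (None \in cmap @: R)) => [/imsetP [w wR /esym /eqP]|noneR].
  by rewrite cmap_eqNone => /codomP [a wa]; exists a; rewrite inE wa in wR.
have [||[e eC] + _] := sc' (cmap @: R).
- by apply/set0Pn; exists (cmap v); apply: imset_f; rewrite inE connect0.
- by apply: contraNneq noneR => ->; rewrite inE.
rewrite tail_cmap head_cmap => /andP [/imsetP [w wR tw] /negP []].
case cw: (cmap w) => [x|]; last by rewrite -cw imset_f in noneR.
have tail_w : tail src' tgt' o' e = w by rewrite -(cmapK cw) (cmapK (etrans tw cw)).
apply: imset_f; rewrite inE -tail_w in wR; rewrite inE.
exact: connect_trans wR (connect1 (darc_edge _ _ o' eC)).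
Qed.

Lemma connect_from_image (D' : {set E'}) o' :
  strongly_connected csrc ctgt (cedges D') o' ->
  forall v, exists a, connect (darc src' tgt' (cedges D') o') (fV a) v.
Proof.
move=> /strongly_connected_rev /connect_to_image reach v; have [a] := reach v.
by rewrite (eq_connect (darc_rev _ _ _ o')) connect_rev; exists a.
Qed.

Hypothesis fV_inj : injective fV.

Lemma sum_netout_codom (F : {set E'}) o : \sum_a netout src' tgt' F o (fV a) =
  \sum_(e in F) (((tail src' tgt' o e \in codom fV) : nat)%:Z -
                 ((Defs.head src' tgt' o e \in codom fV) : nat)%:Z).
Proof.
have sum_codom w : \sum_a ((w == fV a) : nat)%:Z = ((w \in codom fV) : nat)%:Z.
  case: (boolP (w \in codom fV)) => [/codomP [a ->]|wV].
    rewrite (bigD1 a) //= eqxx big1 ?addr0 // => b /negbTE.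
    by rewrite (inj_eq fV_inj) eq_sym => ->.
  by apply: big1 => a _; case: eqP => // wa; rewrite wa codom_f in wV.
under eq_bigr do rewrite netoutE.
by rewrite exchange_big; apply: eq_bigr => e _; rewrite sumrB !sum_codom.
Qed.

Lemma netout_cedges_None (F : {set E'}) o :
  netout csrc ctgt (cedges F) o None = \sum_a netout src' tgt' F o (fV a).
Proof.
rewrite sum_netout_codom (big_setID (cedges F)) (setIidPr (cedges_sub F)) /=.
rewrite [X in _ + X]big1 ?addr0 => [|e /setDP [eF /(cmap_loop eF) loop]]; last first.
  by rewrite /Defs.tail /Defs.head; case: (o e); rewrite -!cmap_eqNone loop subrr.
by rewrite netoutE; apply: eq_bigr => e _; rewrite tail_cmap head_cmap !cmap_eqNone.
Qed.

End Contraction.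

Section Embedding.
Variables (V E V' E' : finType) (src tgt : E -> V) (src' tgt' : E' -> V').
Variables (fV : V -> V') (fE : E -> E') (D : {set E}) (D' : {set E'}).
Hypotheses (fV_inj : injective fV) (fE_inj : {in D &, injective fE}).
Hypothesis fE_ok :
  forall e, e \in D -> fE e \in D' /\ joins src' tgt' (fE e) (fV (src e)) (fV (tgt e)).
Hypothesis H_loopless : loopless src tgt D.

Definition transport (oH : E -> bool) (o' : E' -> bool) (e' : E') : bool :=
  if [pick e in D | fE e == e'] is Some e then
    if src' e' == fV (src e) then oH e else ~~ oH e
  else o' e'.

Lemma transport_image oH o' e : e \in D ->
  tail src' tgt' (transport oH o') (fE e) = fV (tail src tgt oH e) /\
  Defs.head src' tgt' (transport oH o') (fE e) = fV (Defs.head src tgt oH e).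
Proof.
move=> eD; rewrite /Defs.tail /Defs.head /transport.
have -> : [pick e1 in D | fE e1 == fE e] = Some e.
  case: pickP => [e1 /andP [e1D /eqP same]|/(_ e)]; last by rewrite eD eqxx.
  by rewrite (fE_inj e1D eD same).
have [_ /orP [] /andP [/eqP -> /eqP ->]] := fE_ok eD; first by rewrite eqxx; case: (oH e).
by rewrite (inj_eq fV_inj) eq_sym (negbTE (H_loopless eD)); case: (oH e).
Qed.

Lemma transport_out oH o' e' : e' \notin fE @: D -> transport oH o' e' = o' e'.
Proof.
move=> e'I; rewrite /transport; case: pickP => // e /andP [eD /eqP fe].
by rewrite -fe imset_f in e'I.
Qed.

Lemma connect_transport oH o' u v : connect (darc src tgt D oH) u v ->
  connect (darc src' tgt' D' (transport oH o')) (fV u) (fV v).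
Proof.
move=> /connectP [p]; elim: p u => [|w p IH] u /= => [_ -> //|/andP [/existsP [e] + wp] last_v].
case/andP=> eD /andP [/eqP ue /eqP we]; apply: connect_trans (IH _ wp last_v).
have [] := transport_image oH o' eD; rewrite ue we => <- <-.
by apply: connect1; apply: darc_edge; have [] := fE_ok eD.
Qed.

Lemma image_sub : fE @: D \subset D'.
Proof. by apply/subsetP => _ /imsetP [e eD ->]; have [] := fE_ok eD. Qed.

Lemma cedges_setD_image : cedges fV src' tgt' (D' :\: fE @: D) = cedges fV src' tgt' D'.
Proof.
apply/setP => e; rewrite !inE; case eI: (e \in fE @: D); rewrite //= andbC.
case/imsetP: eI => e0 e0D ->; rewrite /Defs.csrc /Defs.ctgt.
by have [_ /orP [] /andP [/eqP -> /eqP ->]] := fE_ok e0D; rewrite !cmap_image.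
Qed.

Lemma transport_cedges oH o' : {in cedges fV src' tgt' D', transport oH o' =1 o'}.
Proof.
move=> e; rewrite -cedges_setD_image => /(subsetP (cedges_sub _ _ _ _)) /setDP [_].
exact: transport_out.
Qed.

Lemma netout_transport_image oH o' a :
  netout src' tgt' D' (transport oH o') (fV a) =
  netout src tgt D oH a + netout src' tgt' (D' :\: fE @: D) o' (fV a).
Proof.
rewrite (netout_setID _ _ _ (fE @: D)) (setIidPr image_sub); congr (_ + _).
  rewrite !netoutE big_imset //=; apply: eq_bigr => e eD.
  by have [-> ->] := transport_image oH o' eD; rewrite !(inj_eq fV_inj).
by apply: eq_netout => e /setDP [_]; apply: transport_out.
Qed.

Lemma netout_transport_outside oH o' x :
  netout src' tgt' D' (transport oH o') (val x) =
  netout (csrc fV src') (ctgt fV tgt') (cedges fV src' tgt' D') o' (Some x).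
Proof.
by rewrite -netout_cedges_Some; apply: eq_netout; apply: transport_cedges.
Qed.

Lemma connect_outside_distinct o' :
  strongly_connected (csrc fV src') (ctgt fV tgt') (cedges fV src' tgt' D') o' ->
  (exists x y : V, x != y /\ connect (adj src' tgt' (D' :\: fE @: D)) (fV x) (fV y)) ->
  exists a b, a != b /\ connect (darc src' tgt' (D' :\: fE @: D) o') (fV a) (fV b).
Proof.
move=> sc' [x [y [xy xy_outside]]].
have sub : cedges fV src' tgt' D' \subset D' :\: fE @: D.
  by rewrite -cedges_setD_image cedges_sub.
have lift := connect_darc_sub (o1 := o') (o2 := o') sub (fun _ _ => erefl).
apply: (connect_image_distinct (fun u v => adj_darc (u := u) (v := v) o') _ _ xy xy_outside) => v.
  by have [a va] := connect_to_image sc' v; exists a; apply: lift.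
by have [a av] := connect_from_image sc' v; exists a; apply: lift.
Qed.

Lemma strongly_connected_transport oH o' a b :
  strongly_connected (csrc fV src') (ctgt fV tgt') (cedges fV src' tgt' D') o' ->
  (forall v, connect (darc src tgt D oH) b v /\ connect (darc src tgt D oH) v a) ->
  connect (darc src' tgt' (D' :\: fE @: D) o') (fV a) (fV b) ->
  strongly_connected src' tgt' D' (transport oH o').
Proof.
move=> sc' conn_H conn_ab; apply: (strongly_connected_lift (transport_cedges oH o') sc') => u v.
apply: connect_trans (connect_transport o' (conn_H u).2) _.
apply: connect_trans (connect_transport o' (conn_H v).1).
apply: connect_darc_sub conn_ab => [|e /setDP [_ e_out]]; first exact: subsetDl.
by rewrite transport_out.
Qed.

Lemma netout_transport_mod2k k (beta : V' -> int) oH o' v :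
  odd k -> loopless src' tgt' D' -> (beta v == (deg src' tgt' D' v)%:Z %[mod 2])%Z ->
  (forall x, (netout (csrc fV src') (ctgt fV tgt') (cedges fV src' tgt' D') o' (Some x)
                == beta (val x) %[mod (2 * k)%N%:Z])%Z) ->
  (forall a, (netout src tgt D oH a ==
              beta (fV a) - netout src' tgt' (D' :\: fE @: D) o' (fV a) %[mod k%:Z])%Z) ->
  (netout src' tgt' D' (transport oH o') v == beta v %[mod (2 * k)%N%:Z])%Z.
Proof.
move=> odd_k ll' + o'_beta oH_mod.
case: (boolP (v \in codom fV)) => [/codomP [a ->] beta_par|vH _].
  apply: netout_mod2k odd_k ll' beta_par _.
  by have := oH_mod a; rewrite netout_transport_image !eqz_mod_dvd opprB addrA.
by have := o'_beta (exist _ v vH); rewrite -(netout_transport_outside oH).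
Qed.

End Embedding.

Lemma SC_of_ham_cycle k (V E : finType) (src tgt : E -> V) (C : {set E}) :
  loopless src tgt [set: E] -> ham_cycle src tgt [set: E] C -> SZ src tgt k (~: C) ->
  SC src tgt k [set: E].
Proof.
move=> ll ham_C sz beta [_ beta_par beta_sum].
have [oC conn_C] := ham_cycle_orient ll ham_C.
have odd_k : odd k.
  have [_ [_ [/card_gt1P [u [w [_ _ uw]]] _]]] := ham_C.
  by apply: odd_SZ uw sz => e _; apply: ll.
rewrite -setTD in sz; have [o o_C o_mod] := SZ_extend oC sz (eqz_mod_mul2 beta_sum).
exists o; split => [|v]; last exact: netout_mod2k.
apply: strongly_connected_connect => u v.
by apply: connect_darc_sub (conn_C u v) => [|e /o_C ->]; first exact: subsetT.
Qed.

Lemma W_of_ham_paths k (V E : finType) (src tgt : E -> V) :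
  loopless src tgt [set: E] ->
  (forall x y : V, x != y ->
     exists P : {set E}, ham_path src tgt [set: E] x y P /\ SZ src tgt k (~: P)) ->
  W k src tgt [set: E].
Proof.
move=> ll paths V' E' src' tgt' D' fV fE ll' fV_inj fE_inj fE_ok nice.
move=> beta [_ beta_par _] o' sc' o'_beta.
have odd_k : odd k.
  have [x [y [xy _]]] := nice; have [P [_ sz]] := paths x y xy.
  by apply: odd_SZ xy sz => e _; apply: ll.
have [a [b [ab conn_ab]]] := connect_outside_distinct fE_ok sc' nice.
have ba : b != a by rewrite eq_sym.
have [P [ham_P sz]] := paths b a ba.
have [oP conn_P] := ham_path_orient ll ham_P.
pose rest := D' :\: fE @: [set: E].
rewrite -setTD in sz.
have [|oH oH_P oH_mod] :=
  SZ_extend oP (alpha := fun c => beta (fV c) - netout src' tgt' rest o' (fV c)) sz.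
  rewrite sumrB -(netout_cedges_None _ _ fV_inj) (cedges_setD_image fE_ok).
  rewrite eqz_mod_dvd subr0 -eqz_mod_dvd eq_sym.
  exact: eqz_mod_mul2 (o'_beta None).
exists (transport src src' fV fE [set: E] oH o'); split.
- apply: (strongly_connected_transport fV_inj fE_inj fE_ok ll sc' _ conn_ab) => v.
  have lift := connect_darc_sub (subsetT P) (fun e eP => esym (oH_P e eP)).
  by have [bv va] := conn_P v; split; apply: lift.
- move=> v; apply: (netout_transport_mod2k fV_inj fE_inj fE_ok ll odd_k ll' (beta_par v) _ oH_mod).
  by move=> x; apply: (o'_beta (Some x)).
exact: transport_cedges fE_ok oH o'.
Qed.

Theorem proposition2p12 (k : nat) (V E : finType) (src tgt : E -> V) :
  (0 < k)%N -> loopless src tgt [set: E] ->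
  ((exists C : {set E}, ham_cycle src tgt [set: E] C /\ SZ src tgt k (~: C)) ->
     SC src tgt k [set: E]) /\
  ((forall x y : V, x != y ->
      exists P : {set E}, ham_path src tgt [set: E] x y P /\ SZ src tgt k (~: P)) ->
     W k src tgt [set: E]).
Proof.
move=> _ ll; split => [[C [ham_C sz]]|paths].
  exact: SC_of_ham_cycle ll ham_C sz.
exact: W_of_ham_paths ll paths.
Qed.
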